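(* Let $k$ be an algebraically closed field and $S\subset\mathbb{P}^3$ a smooth cubic surface. Let $\begin{pmatrix} a_1&\cdots&a_6\\ b_1&\cdots&b_6\end{pmatrix}$ be a Schläfli double-six of lines on $S$. For $i\neq j$ let $\pi_{ij}$ be a linear form defining the plane spanned by the intersecting lines $b_i$ and $a_j$, where the forms $\pi_{12},\pi_{23},\pi_{31},\pi_{13},\pi_{21},\pi_{32}$ are scaled so that $\pi_{12}\pi_{23}\pi_{31}+\pi_{13}\pi_{21}\pi_{32}$ is a defining polynomial of $S$ (such a scaling exists), so that $$\Re=\begin{pmatrix}0&\pi_{12}&\pi_{13}\\ \pi_{21}&0&\pi_{23}\\ \pi_{31}&\pi_{32}&0\end{pmatrix}$$ is a determinantal representation of $S$. Then the set of six skew lines corresponding to $\Re$ is $\{a_1,\dots,a_6\}$ and the set of six skew lines corresponding to $\Re^t$ is $\{b_1,\dots,b_6\}$; that is, the two sets together form the double-six $\begin{pmatrix} a_1&\cdots&a_6\\ b_1&\cdots&b_6\end{pmatrix}$.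
   Context: A Schläfli double-six on $S$ is a set of twelve lines $a_1,\dots,a_6,b_1,\dots,b_6$ on $S$ such that the $a_i$ are mutually skew, the $b_j$ are mutually skew, and $a_i$ meets $b_j$ if and only if $i\neq j$. A determinantal representation of $S$ (defined by a cubic form $F$) is a $3\times 3$ matrix of linear forms $M=z_0M_0+\dots+z_3M_3$ with $\det M=cF$, $c\in k\setminus\{0\}$. For a point $P=(\zeta,\eta,\xi)\in\mathbb{P}^2$, the three entries of $M\cdot(\zeta,\eta,\xi)^t$ are linear forms on $\mathbb{P}^3$; there are exactly six points $P$ for which the three planes so defined intersect in a line, and the six resulting lines lie on $S$ and are mutually skew; they are called the six skew lines corresponding to $M$. *)

From HB Require Import structures.
From mathcomp Require Import all_boot all_order all_algebra.
From mathcomp Require Import mpoly.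
Set Implicit Arguments. Unset Strict Implicit. Unset Printing Implicit Defensive.
Import GRing.Theory.
Local Open Scope ring_scope.

Section CubicSurfaces.
Variable k : fieldType.

(* Points of P^3 are nonzero row vectors of k^4 (up to scaling);
   coordinates z_0..z_3. Evaluation of a form at such a vector: *)
Definition pt_eval (F : {mpoly k[4]}) (x : 'rV[k]_4) : k := F.@[fun i => x 0 i].

Definition smooth_cubic_form (F : {mpoly k[4]}) : Prop :=
  F \is 3.-homog /\
  forall x : 'rV[k]_4, x != 0 -> pt_eval F x = 0 ->
    exists i : 'I_4, pt_eval (mderiv i F) x != 0.

(* A line of P^3 is a 2-dimensional subspace of k^4, given as the row space
   of a rank-2 2x4 matrix.  Two such matrices give the same line iff they
   have the same row space, (L1 == L2)%MS. *)
Definition is_line (L : 'M[k]_(2,4)) : Prop := \rank L = 2%N.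

Definition line_on (F : {mpoly k[4]}) (L : 'M[k]_(2,4)) : Prop :=
  forall x : 'rV[k]_4, (x <= L)%MS -> pt_eval F x = 0.

Definition lines_meet (L1 L2 : 'M[k]_(2,4)) : bool := (L1 :&: L2)%MS != 0.

Definition double_six (F : {mpoly k[4]}) (a b : 'I_6 -> 'M[k]_(2,4)) : Prop :=
  (forall i, is_line (a i) /\ is_line (b i) /\ line_on F (a i) /\ line_on F (b i)) /\
  (forall i j, i != j -> ~~ lines_meet (a i) (a j)) /\
  (forall i j, i != j -> ~~ lines_meet (b i) (b j)) /\
  (forall i j, lines_meet (a i) (b j) = (i != j)).

Definition lin_eval (l : 'rV[k]_4) (x : 'rV[k]_4) : k := \sum_(i < 4) l 0 i * x 0 i.
Definition lin_poly (l : 'rV[k]_4) : {mpoly k[4]} := \sum_(i < 4) l 0 i *: 'X_i.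

Definition form_vanishes_on (l : 'rV[k]_4) (L : 'M[k]_(2,4)) : Prop :=
  forall x : 'rV[k]_4, (x <= L)%MS -> lin_eval l x = 0.

(* A 3x3 matrix of linear forms M = z_0 M_0 + ... + z_3 M_3 is stored entrywise
   by the coefficient vectors of its entries: M : 'M['rV[k]_4]_3. *)

(* For P = (zeta,eta,xi), the coefficient matrix (3x4) of the three linear forms
   given by the entries of M . P^t. *)
Definition forms_at (M : 'M['rV[k]_4]_3) (P : 'rV[k]_3) : 'M[k]_(3,4) :=
  \matrix_(r < 3, j < 4) \sum_(c < 3) P 0 c * M r c 0 j.

(* L is one of the six skew lines corresponding to M: for some point P of P^2
   the three planes defined by M . P^t meet in a line, and that line is L. *)
Definition corr_line (M : 'M['rV[k]_4]_3) (L : 'M[k]_(2,4)) : Prop :=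
  exists P : 'rV[k]_3, P != 0 /\ \rank (forms_at M P) = 2%N /\
    (L == kermx (forms_at M P)^T)%MS.

End CubicSurfaces.

(* indices 1,2,3 of the paper are the ordinals 0,1,2 of 'I_6 *)
Definition i36 (i : 'I_3) : 'I_6 := widen_ord (isT : (3 <= 6)%N) i.

Definition Rmat (k : fieldType) (pi : 'I_6 -> 'I_6 -> 'rV[k]_4) : 'M['rV[k]_4]_3 :=
  \matrix_(i < 3, j < 3) (if i == j then 0 else pi (i36 i) (i36 j)).

From HB Require Import structures.
From mathcomp Require Import all_boot all_order all_algebra.
From mathcomp Require Import mpoly.
From mathcomp Require Import ring zify.
Set Implicit Arguments. Unset Strict Implicit. Unset Printing Implicit Defensive.
Import GRing.Theory.
Local Open Scope ring_scope.

(* Write [rho_r(P)] for the three linear forms of [R P^t]; [rho_r(P)] is a combination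
   of the two planes through b_r, so it vanishes on b_r.  If exactly one coordinate of P
   is zero, the kernel of [R P^t] has dimension at most 1; if two are, it is a_1, a_2 or a_3.
   For j >= 4, take the points of a_j on b_1, b_2, b_3: as det R vanishes on a_j, the
   values of the six forms at these points form a singular hollow 3x3 matrix, and a
   kernel vector P of it has a_j in the kernel of [R P^t].
   Conversely, if all coordinates of P are nonzero and [R P^t] has rank 2, a relation
   [w R P^t = 0] gives the relation [(w_r P_s)] among the six forms pi_rs.  These relations
   form a plane on which the cubic c_12 c_23 c_31 - c_13 c_21 c_32 is not identically zero,
   while it vanishes at the relations of P and of the points giving a_4, a_5, a_6.  A
   nonzero binary cubic has at most three zeros, so P gives one of these three lines.
   Exchanging the roles of a and b (and transposing R) gives the statement for the b_j.
   Indices 1..6 of the paper are 0..5 below. *)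

(** * Hyperplanes *)

Lemma eqmxb_trans (K : fieldType) m1 m2 m3 n (A : 'M[K]_(m1, n)) (B : 'M[K]_(m2, n))
    (C : 'M[K]_(m3, n)) : (A == B)%MS -> (B == C)%MS -> (A == C)%MS.
Proof. by case/andP=> AB BA /andP[BC CB]; rewrite (submx_trans AB BC) (submx_trans CB BA). Qed.

Section Hyperplanes.
Variables (K : fieldType) (n : nat).
Implicit Types (l u v : 'rV[K]_n).

Definition hplane l : 'M[K]_n := kermx l^T.

Lemma sub_hplane m (Y : 'M_(m, n)) l : (Y <= hplane l)%MS = (Y *m l^T == 0).
Proof. exact: sub_kermx. Qed.

Lemma sub_hplane0 m (Y : 'M_(m, n)) : (Y <= hplane 0)%MS.
Proof. by rewrite sub_hplane trmx0 mulmx0. Qed.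

Lemma sub_hplaneD m (Y : 'M_(m, n)) (x y : K) u v :
  (Y <= hplane u)%MS -> (Y <= hplane v)%MS -> (Y <= hplane (x *: u + y *: v))%MS.
Proof.
rewrite !sub_hplane => /eqP Yu /eqP Yv.
by rewrite linearD !linearZ /= mulmxDr -!scalemxAr Yu Yv !scaler0 addr0.
Qed.

Lemma sub_hplaneZr m (Y : 'M_(m, n)) (x : K) l :
  (Y <= hplane l)%MS -> (Y <= hplane (x *: l))%MS.
Proof. by rewrite !sub_hplane linearZ /= -scalemxAr => /eqP ->; rewrite scaler0. Qed.

Lemma sub_hplaneZ m (Y : 'M_(m, n)) (x : K) l :
  x != 0 -> (Y <= hplane (x *: l))%MS = (Y <= hplane l)%MS.
Proof. by move=> nx; rewrite !sub_hplane linearZ /= -scalemxAr scaler_eq0 (negPf nx). Qed.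

Lemma mxrank_hplane l : l != 0 -> \rank (hplane l) = n.-1.
Proof. by move=> nz; rewrite mxrank_ker mxrank_tr rank_rV nz subn1. Qed.

Lemma sub_kermx_tr m p (Y : 'M_(m, n)) (A : 'M_(p, n)) :
  (Y <= kermx A^T)%MS = [forall r, (Y <= hplane (row r A))%MS].
Proof.
have colE i r : (Y *m (row r A)^T) i 0 = (Y *m A^T) i r.
  by rewrite !mxE; apply: eq_bigr => j _; rewrite !mxE.
rewrite sub_kermx; apply/eqP/forallP => [YA r | Yr].
  by rewrite sub_hplane; apply/eqP/matrixP => i j; rewrite ord1 colE YA !mxE.
apply/matrixP => i r; move: (Yr r); rewrite sub_hplane => /eqP/matrixP/(_ i 0).
by rewrite colE !mxE.
Qed.

Lemma sub_addsmx_rowP (x u v : 'rV[K]_n) :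
  (x <= u + v)%MS -> exists s t, x = s *: u + t *: v.
Proof.
case/sub_addsmxP => [[s t] /= ->]; exists (s 0 0), (t 0 0).
by rewrite {1}(mx11_scalar s) {1}(mx11_scalar t) !mul_scalar_mx.
Qed.

Lemma rank2_coord_eq0 m (V : 'M[K]_(m, n)) (i : 'I_n) : (2 <= \rank V)%N ->
  exists2 r : 'rV_n, r != 0 & (r <= V)%MS && (r 0 i == 0).
Proof.
move=> rV; pose H := kermx (delta_mx i 0 : 'cV[K]_n).
have rH : \rank H = n.-1 by rewrite mxrank_ker mxrank_delta subn1.
have rVH : (1 <= \rank (V :&: H))%N.
  have := mxrank_sum_cap V H; have := rank_leq_col (V + H)%MS; have := ltn_ord i.
  rewrite rH; move: (\rank V) (\rank (V + H)%MS) (\rank (V :&: H)%MS) rV; lia.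
exists (nz_row (V :&: H)%MS); first by rewrite nz_row_eq0 -mxrank_eq0 -lt0n.
have /andP[-> rH0] : (nz_row (V :&: H) <= V)%MS && (nz_row (V :&: H) <= H)%MS.
  by rewrite -sub_capmx nz_row_sub.
by move: rH0; rewrite sub_kermx -colE => /eqP/colP/(_ 0); rewrite !mxE /= => ->.
Qed.

Lemma rV_sub_eqmx u v : u != 0 -> (u <= v)%MS -> (u == v)%MS.
Proof.
move=> nu uv; have nv : v != 0.
  by apply: contraNneq nu => v0; move: uv; rewrite v0 => /mxrankS; rewrite mxrank0 leqn0 mxrank_eq0.
by rewrite /eqmx uv -(geq_leqif (mxrank_leqif_sup uv)) !rank_rV nu nv.
Qed.

Section SpanningPair.
Variables (m1 m2 : nat) (U : 'M[K]_(m1, n)) (V : 'M[K]_(m2, n)).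
Hypothesis UV_full : row_full (U + V)%MS.

Lemma hplane_full_eq0 l : (U <= hplane l)%MS -> (V <= hplane l)%MS -> l = 0.
Proof.
move=> Ul Vl; have UVl : (U + V <= hplane l)%MS by rewrite addsmx_sub Ul.
have := submx_trans (submx_full 1%:M UV_full) UVl.
by rewrite sub_hplane mul1mx trmx_eq0 => /eqP.
Qed.

Lemma hplane_full_addr_eq0 u v :
  (U <= hplane u)%MS -> (V <= hplane v)%MS -> u + v = 0 -> u = 0.
Proof.
move=> Uu Vv /eqP; rewrite addr_eq0 => /eqP uv; apply: hplane_full_eq0 => //.
by rewrite uv -scaleN1r sub_hplaneZ ?oppr_eq0 ?oner_eq0.
Qed.

Lemma hplane_full_free u v (x y : K) :
  (U <= hplane u)%MS -> (V <= hplane v)%MS -> u != 0 -> v != 0 ->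
  x *: u + y *: v = 0 -> x = 0 /\ y = 0.
Proof.
move=> Uu Vv nu nv xy0.
have xu0 := hplane_full_addr_eq0 (sub_hplaneZr x Uu) (sub_hplaneZr y Vv) xy0.
move: xy0; rewrite xu0 add0r => /eqP; rewrite scaler_eq0 (negPf nv) orbF => /eqP ->.
by move/eqP: xu0; rewrite scaler_eq0 (negPf nu) orbF => /eqP.
Qed.

Lemma mxrank_sub_hplane2 u v m (Y : 'M_(m, n)) :
  (U <= hplane u)%MS -> (V <= hplane v)%MS -> u != 0 -> v != 0 ->
  (Y <= hplane u)%MS -> (Y <= hplane v)%MS -> (\rank Y <= n.-2)%N.
Proof.
move=> Uu Vv nu nv Yu Yv; rewrite leqNgt; apply/negP => Ybig.
have uY : (hplane u <= Y)%MS.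
  by rewrite -(geq_leqif (mxrank_leqif_sup Yu)) mxrank_hplane //; lia.
by move/eqP: nv; apply; apply: hplane_full_eq0 (submx_trans Uu (submx_trans uY Yv)) Vv.
Qed.

Lemma sub_hplane2 u v m p (Y : 'M_(m, n)) (W : 'M_(p, n)) :
  (U <= hplane u)%MS -> (V <= hplane v)%MS -> u != 0 -> v != 0 ->
  \rank W = n.-2 -> (W <= hplane u)%MS -> (W <= hplane v)%MS ->
  (Y <= hplane u)%MS -> (Y <= hplane v)%MS -> (Y <= W)%MS.
Proof.
move=> Uu Vv nu nv rW Wu Wv Yu Yv.
have YWu : (Y + W <= hplane u)%MS by rewrite addsmx_sub Yu.
have YWv : (Y + W <= hplane v)%MS by rewrite addsmx_sub Yv.
have : (Y + W <= W)%MS.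
  rewrite -(geq_leqif (mxrank_leqif_sup (addsmxSr Y W))) rW.
  exact: (mxrank_sub_hplane2 Uu Vv nu nv YWu YWv).
exact: submx_trans (addsmxSl Y W).
Qed.

End SpanningPair.
End Hyperplanes.

(** * Zeros of binary cubic forms *)

Section CubicForms.
Variables (K : fieldType) (m : nat).
Implicit Types (c u v : 'rV[K]_m).

Definition cubic_form (g : 'rV[K]_m -> K) : Prop :=
  forall u v, exists B C : K, forall x y : K,
    g (x *: u + y *: v) = x ^+ 3 * g u + x ^+ 2 * y * B + x * y ^+ 2 * C + y ^+ 3 * g v.

Lemma binary_cubic_zeros (B C x y u v : K) :
  x * y != 0 -> u * v != 0 -> x * v - y * u != 0 ->
  x ^+ 2 * y * B + x * y ^+ 2 * C = 0 -> u ^+ 2 * v * B + u * v ^+ 2 * C = 0 ->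
  B = 0 /\ C = 0.
Proof.
move=> nxy nuv ndet exy euv.
have lxy : B * x + C * y = 0.
  move: exy; rewrite (_ : _ + _ = x * y * (B * x + C * y)); last by ring.
  by move/eqP; rewrite mulf_eq0 (negPf nxy) => /eqP.
have luv : B * u + C * v = 0.
  move: euv; rewrite (_ : _ + _ = u * v * (B * u + C * v)); last by ring.
  by move/eqP; rewrite mulf_eq0 (negPf nuv) => /eqP.
split; apply/eqP.
  have : B * (x * v - y * u) = v * (B * x + C * y) - y * (B * u + C * v) by ring.
  by rewrite lxy luv !mulr0 subr0 => /eqP; rewrite mulf_eq0 (negPf ndet) orbF.
have : C * (x * v - y * u) = x * (B * u + C * v) - u * (B * x + C * y) by ring.
by rewrite lxy luv !mulr0 subr0 => /eqP; rewrite mulf_eq0 (negPf ndet) orbF.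
Qed.

Variables (p : nat) (V : 'M[K]_(p, m)) (g : 'rV[K]_m -> K).
Hypotheses (g_cubic : cubic_form g) (V_rank : (\rank V <= 2)%N).
Hypothesis g_neq0 : exists2 r, (r <= V)%MS & g r != 0.

Lemma cubic_form_three_zeros c0 c1 c2 c3 :
  (c0 <= V)%MS -> (c1 <= V)%MS -> (c2 <= V)%MS -> (c3 <= V)%MS ->
  g c0 = 0 -> g c1 = 0 -> g c2 = 0 -> g c3 = 0 ->
  c0 != 0 -> c1 != 0 -> c2 != 0 -> c3 != 0 ->
  ~~ (c2 == c1)%MS -> ~~ (c3 == c1)%MS -> ~~ (c3 == c2)%MS ->
  [|| (c0 == c1)%MS, (c0 == c2)%MS | (c0 == c3)%MS].
Proof.
move=> c0V c1V c2V c3V g0 g1 g2 g3 nc0 nc1 nc2 nc3 n21 n31 n32.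
have V12 : (V <= c1 + c2)%MS.
  have c12V : (c1 + c2 <= V)%MS by rewrite addsmx_sub c1V.
  have lt12 : (c1 < c1 + c2)%MS.
    rewrite ltmxE addsmxSl addsmx_sub submx_refl /=.
    by apply: contra n21; apply: rV_sub_eqmx.
  have := rank_ltmx lt12; rewrite rank_rV nc1 => r12.
  by rewrite -(geq_leqif (mxrank_leqif_sup c12V)); apply: leq_trans V_rank r12.
have [B [C gE]] := g_cubic c1 c2.
have g12E x y : g (x *: c1 + y *: c2) = x ^+ 2 * y * B + x * y ^+ 2 * C.
  by rewrite gE g1 g2 !mulr0 addr0 add0r.
have coords_neq0 x y c : c = x *: c1 + y *: c2 -> c != 0 ->
    ~~ (c == c1)%MS -> ~~ (c == c2)%MS -> x * y != 0.
  move=> cE nc nc1' nc2'; rewrite mulf_neq0 //.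
    apply: contraNneq nc2' => x0; apply: rV_sub_eqmx nc _.
    by rewrite cE x0 scale0r add0r scalemx_sub.
  apply: contraNneq nc1' => y0; apply: rV_sub_eqmx nc _.
  by rewrite cE y0 scale0r addr0 scalemx_sub.
have [x [y c3E]] := sub_addsmx_rowP (submx_trans c3V V12).
have [u [v c0E]] := sub_addsmx_rowP (submx_trans c0V V12).
apply/negPn/negP => /norP[n01 /norP[n02 n03]].
have nxy : x * y != 0 by apply: coords_neq0 c3E nc3 n31 n32.
have nuv : u * v != 0 by apply: coords_neq0 c0E nc0 n01 n02.
have ndet : x * v - y * u != 0.
  apply: contra n03 => /eqP/subr0_eq xvyu; apply: rV_sub_eqmx nc0 _.
  have nx : x != 0 by apply: contraNneq nxy => ->; rewrite mul0r.
  have -> : c0 = (u / x) *: c3.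
    rewrite c0E c3E scalerDr !scalerA divfK //; congr (_ + _ *: _).
    by apply: (mulfI nx); rewrite xvyu; field.
  exact: scalemx_sub.
have [B0 C0] : B = 0 /\ C = 0.
  by apply: binary_cubic_zeros nxy nuv ndet _ _; rewrite -g12E -?c3E -?c0E.
case: g_neq0 => r rV; have [s [t ->]] := sub_addsmx_rowP (submx_trans rV V12).
by rewrite g12E B0 C0 !mulr0 addr0 eqxx.
Qed.

End CubicForms.

Section BigI3.
Variables (R : Type) (idx : R) (op : Monoid.com_law idx).

Lemma big_I3 (f : 'I_3 -> R) : \big[op/idx]_s f s = op (op (f 0) (f 1)) (f 2).
Proof.
rewrite !big_ord_recr big_ord0 /= Monoid.mul1m.
by congr (op (op (f _) (f _)) (f _)); apply/val_inj.
Qed.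

Lemma big_I3_cycle (f : 'I_3 -> R) (r : 'I_3) :
  \big[op/idx]_s f s = op (op (f r) (f (r + 1))) (f (r + 2)).
Proof. by rewrite (reindex_inj (addrI r)) big_I3 addr0. Qed.

End BigI3.

Lemma prod_I3_shift (R : comNzRingType) (f : 'I_3 -> R) (d : 'I_3) :
  \prod_s f (s + d) = \prod_s f s.
Proof. by rewrite [RHS](reindex_inj (addIr d)). Qed.

Lemma I3_cycle (r : 'I_3) :
  [/\ r + 1 + 1 = r + 2, r + 1 + 2 = r, r + 2 + 1 = r & r + 2 + 2 = r + 1].
Proof. by case: r => [[|[|[|//]]] ?]; split; apply/val_inj. Qed.

Lemma I3_neq (r : 'I_3) : [/\ r != r + 1, r != r + 2 & r + 1 != r + 2].
Proof. by case: r => [[|[|[|//]]] ?]. Qed.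

Lemma I3_cases (r s : 'I_3) : [\/ s = r, s = r + 1 | s = r + 2].
Proof.
by case: r s => [[|[|[|//]]] ?] [[|[|[|//]]] ?];
  [apply: Or31|apply: Or32|apply: Or33|apply: Or33|apply: Or31|apply: Or32
  |apply: Or32|apply: Or33|apply: Or31]; apply/val_inj.
Qed.

Lemma I3_other (r : 'I_3) : r != 0 -> r != 1 -> r = 2.
Proof. by case: r => [[|[|[|//]]] ?] //= _ _; apply/val_inj. Qed.

Lemma i36_neq (r s : 'I_3) : r != s -> i36 r != i36 s.
Proof. by apply: contraNneq => /(congr1 val) /= /val_inj ->. Qed.

Lemma i36_neqC (r s : 'I_3) : r != s -> i36 s != i36 r.
Proof. by rewrite eq_sym; apply: i36_neq. Qed.

Lemma i36_ge3 (r : 'I_3) (j : 'I_6) : (3 <= j)%N -> j != i36 r.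
Proof. by move=> j3; apply: contraTneq j3 => ->; rewrite -ltnNge /= ltn_ord. Qed.

Lemma det_hollow3 (R : comNzRingType) (f : 'I_3 -> 'I_3 -> R) :
  \det (\matrix_(i, j) if i == j then 0 else f i j) =
  f 0 1 * f 1 2 * f 2 0 + f 0 2 * f 1 0 * f 2 1.
Proof.
pose g (i j : nat) := if i == j then 0 else f (inord i) (inord j).
have -> : \matrix_(i, j) (if i == j then 0 else f i j) = \matrix_(i, j) g i j.
  by apply/matrixP => i j; rewrite !mxE /g !inord_val.
rewrite (expand_det_row _ 0) !big_ord_recr big_ord0 /cofactor.
rewrite !(expand_det_row _ 0) !big_ord_recr !big_ord0 /cofactor !det_mx11 !mxE /g /=.
have I3E : [/\ inord 0 = 0 :> 'I_3, inord 1 = 1 :> 'I_3 & inord 2 = 2 :> 'I_3].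
  by split; apply/val_inj; rewrite /= inordK.
case: I3E => -> -> ->; rewrite !expr0 !expr1 expr2; ring.
Qed.

Lemma hollow3_kernel (K : fieldType) (f : 'I_3 -> 'I_3 -> K) :
  f 0 1 * f 1 2 * f 2 0 + f 0 2 * f 1 0 * f 2 1 = 0 ->
  exists2 P : 'rV[K]_3, P != 0 &
    forall r, P 0 (r + 1) * f r (r + 1) + P 0 (r + 2) * f r (r + 2) = 0.
Proof.
rewrite -det_hollow3 -det_tr => /eqP/det0P[P nP PM0]; exists P => // r.
have /rowP/(_ r) := PM0; rewrite !mxE (big_I3_cycle _ _ r) /= !mxE eqxx.
by case: (I3_neq r) => /negPf-> /negPf-> _; rewrite mulr0 add0r.
Qed.

Lemma closed_field_avoid (K : closedFieldType) (u : K) : exists t : K, t != 0 /\ t != u.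
Proof.
have p_neq0 : 'X * ('X - u%:P) != 0 :> {poly K}.
  by rewrite mulf_neq0 ?polyX_eq0 ?polyXsubC_eq0.
have [t] := closed_nonrootP _ p_neq0; rewrite rootE !hornerE mulf_eq0 negb_or subr_eq0.
by case/andP=> ? ?; exists t.
Qed.

Lemma pencil_cubic_eq0 (K : fieldType) (t al be e01 e02 e10 e12 e20 e21 f20 f21 : K) :
  t != 0 -> be - t * al != 0 -> al * e20 + be * f20 = 0 -> al * e21 + be * f21 = 0 ->
  t * e01 * e12 * (e20 + t * f20) + t * e02 * e10 * (e21 + t * f21) = 0 ->
  e01 * e12 * e20 + e02 * e10 * e21 = 0.
Proof.
move=> nt nbt h20 h21 hdet; apply/eqP.
have : t * (be - t * al) * (e01 * e12 * e20 + e02 * e10 * e21) =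
    be * (t * e01 * e12 * (e20 + t * f20) + t * e02 * e10 * (e21 + t * f21))
    - t ^+ 2 * (e01 * e12 * (al * e20 + be * f20) + e02 * e10 * (al * e21 + be * f21)).
  by ring.
rewrite hdet h20 h21 !(mulr0, addr0, subr0) => /eqP.
by rewrite !mulf_eq0 (negPf nt) (negPf nbt).
Qed.

Section LinearForms.
Variable K : fieldType.
Implicit Types (l x y : 'rV[K]_4) (U V : 'M[K]_(2, 4)).

Lemma lin_evalE l x : lin_eval l x = (x *m l^T) 0 0.
Proof. by rewrite /lin_eval !mxE; apply: eq_bigr => j _; rewrite !mxE mulrC. Qed.

Lemma sub_hplane_row x l : (x <= hplane l)%MS = (lin_eval l x == 0).
Proof.
rewrite sub_hplane lin_evalE; apply/eqP/eqP => [-> | x_l]; first by rewrite mxE.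
by apply/matrixP => i j; rewrite !ord1 x_l mxE.
Qed.

Lemma lin_evalDr l x y (s t : K) :
  lin_eval l (s *: x + t *: y) = s * lin_eval l x + t * lin_eval l y.
Proof. by rewrite !lin_evalE mulmxDl -!scalemxAl !mxE. Qed.

Lemma lin_evalDl l1 l2 x (s t : K) :
  lin_eval (s *: l1 + t *: l2) x = s * lin_eval l1 x + t * lin_eval l2 x.
Proof. by rewrite !lin_evalE linearD !linearZ /= mulmxDr -!scalemxAr !mxE. Qed.

Lemma lin_eval_eq0 m (Y : 'M_(m, 4)) l x :
  (Y <= hplane l)%MS -> (x <= Y)%MS -> lin_eval l x = 0.
Proof. by move=> Yl xY; apply/eqP; rewrite -sub_hplane_row (submx_trans xY Yl). Qed.

Lemma form_vanishes_on_hplane l U : form_vanishes_on l U -> (U <= hplane l)%MS.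
Proof.
move=> lU; rewrite sub_hplane; apply/eqP/matrixP => i j; rewrite ord1 [RHS]mxE.
by have := lU (row i U) (row_sub i U); rewrite lin_evalE -row_mul mxE.
Qed.

Lemma pt_eval_lin_poly l x : pt_eval (lin_poly l) x = lin_eval l x.
Proof.
rewrite /pt_eval /lin_poly /lin_eval (big_morph _ (mevalD _) (meval0 _)).
by apply: eq_bigr => i _; rewrite mevalZ mevalXU.
Qed.

Lemma skew_lines_full U V : is_line U -> is_line V -> ~~ lines_meet U V -> row_full (U + V)%MS.
Proof.
rewrite /is_line /lines_meet negbK => rU rV /eqP UV0.
by rewrite /row_full; have := mxrank_sum_cap U V; rewrite UV0 mxrank0 rU rV addn0 => ->.
Qed.

Lemma skew_sub_eq0 m (X : 'M_(m, 4)) U V :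
  ~~ lines_meet U V -> (X <= U)%MS -> (X <= V)%MS -> X = 0.
Proof.
rewrite /lines_meet negbK => /eqP UV0 XU XV.
by apply/eqP; rewrite -submx0 -UV0 sub_capmx XU.
Qed.

Lemma points_span_line U V W x y : is_line U -> ~~ lines_meet V W ->
  (x <= U)%MS -> (y <= U)%MS -> (x <= V)%MS -> (y <= W)%MS -> x != 0 -> y != 0 ->
  (U <= x + y)%MS.
Proof.
move=> rU VW xU yU xV yW nx ny.
have xy0 : (x :&: y)%MS = 0.
  by apply: skew_sub_eq0 VW (submx_trans (capmxSl x y) xV) (submx_trans (capmxSr x y) yW).
have rxy : \rank (x + y)%MS = 2%N.
  by have := mxrank_sum_cap x y; rewrite xy0 mxrank0 !rank_rV nx ny addn0.
have xyU : (x + y <= U)%MS by rewrite addsmx_sub xU.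
by rewrite -(geq_leqif (mxrank_leqif_sup xyU)) rxy rU.
Qed.

End LinearForms.

(** * The matrix R of a double-six *)

Section DoubleSixPlanes.
Variables (k : closedFieldType) (F : {mpoly k[4]}).
Variables (a b : 'I_6 -> 'M[k]_(2, 4)) (pi : 'I_6 -> 'I_6 -> 'rV[k]_4).
Hypothesis ab_double_six : double_six F a b.
Hypothesis pi_planes : forall i j : 'I_6, i != j ->
  pi i j != 0 /\ form_vanishes_on (pi i j) (b i) /\ form_vanishes_on (pi i j) (a j).

Implicit Types (i j : 'I_6) (w P : 'rV[k]_3) (r s t : 'I_3) (c : 'rV[k]_(3 + 3)).

Local Notation p3 r s := (pi (i36 r) (i36 s)).
Local Notation a3 r := (a (i36 r)).
Local Notation b3 r := (b (i36 r)).

Lemma a_rank i : \rank (a i) = 2%N.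
Proof. by case: ab_double_six => /(_ i)[]. Qed.

Lemma b_rank i : \rank (b i) = 2%N.
Proof. by case: ab_double_six => /(_ i)[_ []]. Qed.

Lemma a_skew i j : i != j -> ~~ lines_meet (a i) (a j).
Proof. by case: ab_double_six => _ [+ _]; apply. Qed.

Lemma b_skew i j : i != j -> ~~ lines_meet (b i) (b j).
Proof. by case: ab_double_six => _ [_ [+ _]]; apply. Qed.

Lemma a_full i j : i != j -> row_full (a i + a j)%MS.
Proof. by move=> ij; apply: skew_lines_full (a_rank i) (a_rank j) (a_skew ij). Qed.

Lemma b_full i j : i != j -> row_full (b i + b j)%MS.
Proof. by move=> ij; apply: skew_lines_full (b_rank i) (b_rank j) (b_skew ij). Qed.

Lemma ab_full i : row_full (a i + b i)%MS.
Proof.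
apply: skew_lines_full (a_rank i) (b_rank i) _.
by case: ab_double_six => _ [_ [_ ->]]; rewrite eqxx.
Qed.

Lemma ab_meet i j : i != j -> lines_meet (a i) (b j).
Proof. by case: ab_double_six => _ [_ [_ ->]]. Qed.

Lemma a_sub_a i j : (a i <= a j)%MS -> i = j.
Proof.
apply: contraTeq => ij; apply/negP => aij.
by have := a_rank i; rewrite (skew_sub_eq0 (a_skew ij) (submx_refl _) aij) mxrank0.
Qed.

Lemma pi_neq0 i j : i != j -> pi i j != 0.
Proof. by case/pi_planes. Qed.

Lemma b_sub_pi i j : i != j -> (b i <= hplane (pi i j))%MS.
Proof. by case/pi_planes => _ [/form_vanishes_on_hplane]. Qed.

Lemma a_sub_pi i j : i != j -> (a j <= hplane (pi i j))%MS.
Proof. by case/pi_planes => _ [_ /form_vanishes_on_hplane]. Qed.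

Definition rho P r : 'rV[k]_4 :=
  P 0 (r + 1) *: p3 r (r + 1) + P 0 (r + 2) *: p3 r (r + 2).

Definition kerR P : 'M[k]_4 := kermx (forms_at (Rmat pi) P)^T.

Lemma row_forms_at_Rmat P r : row r (forms_at (Rmat pi) P) = rho P r.
Proof.
apply/rowP => j; rewrite !mxE (big_I3_cycle _ _ r) /= !mxE eqxx.
by case: (I3_neq r) => /negPf-> /negPf-> _; rewrite !mxE mulr0 add0r.
Qed.

Lemma sub_kerR m (Y : 'M_(m, 4)) P :
  (Y <= kerR P)%MS = [forall r, (Y <= hplane (rho P r))%MS].
Proof. by rewrite /kerR sub_kermx_tr; apply: eq_forallb => r; rewrite row_forms_at_Rmat. Qed.

Lemma kerR_sub_rho P r : (kerR P <= hplane (rho P r))%MS.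
Proof. by move: (submx_refl (kerR P)); rewrite sub_kerR => /forallP. Qed.

Lemma b_sub_rho P r : (b3 r <= hplane (rho P r))%MS.
Proof. by case: (I3_neq r) => n01 n02 _; rewrite sub_hplaneD ?b_sub_pi ?i36_neq. Qed.

Lemma kerR_supported P r :
  P 0 (r + 1) = 0 -> P 0 (r + 2) = 0 -> P 0 r != 0 -> (kerR P == a3 r)%MS.
Proof.
move=> P1 P2 nP0; case: (I3_cycle r) => c11 c12 c21 c22.
case: (I3_neq r) => n01 n02 n12.
have rho0 : rho P r = 0 by rewrite /rho P1 P2 !scale0r addr0.
have rho1 : rho P (r + 1) = P 0 r *: p3 (r + 1) r.
  by rewrite /rho c11 c12 P2 scale0r add0r.
have rho2 : rho P (r + 2) = P 0 r *: p3 (r + 2) r.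
  by rewrite /rho c21 c22 P1 scale0r addr0.
apply/andP; split.
  have K1 := kerR_sub_rho P (r + 1); have K2 := kerR_sub_rho P (r + 2).
  rewrite rho1 sub_hplaneZ // in K1; rewrite rho2 sub_hplaneZ // in K2.
  apply: (sub_hplane2 (b_full (i36_neq n12)) (b_sub_pi (i36_neqC n01))
    (b_sub_pi (i36_neqC n02))) => //; rewrite ?pi_neq0 ?a_rank ?a_sub_pi ?i36_neqC //.
rewrite sub_kerR; apply/forallP => s.
case: (I3_cases r s) => ->; rewrite ?rho0 ?rho1 ?rho2 ?sub_hplane0 //.
  by rewrite sub_hplaneZr ?a_sub_pi ?i36_neqC.
by rewrite sub_hplaneZr ?a_sub_pi ?i36_neqC.
Qed.

(* The kernel meets a_(r+2) inside the plane pi_(r+1,r+2) = 0, and this intersection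
   also lies in a_(r+1). *)
Lemma kerR_rank_le1 P r :
  P 0 r = 0 -> P 0 (r + 1) != 0 -> P 0 (r + 2) != 0 -> (\rank (kerR P) <= 1)%N.
Proof.
move=> P0 nP1 nP2; case: (I3_cycle r) => c11 c12 c21 c22.
case: (I3_neq r) => n01 n02 n12.
set Y := kerR P; set Z := (Y :&: a3 (r + 2)%R)%MS.
have Y12 : (Y <= hplane (p3 (r + 1)%R (r + 2)%R))%MS.
  by have := kerR_sub_rho P (r + 1); rewrite /rho c11 c12 P0 scale0r addr0 sub_hplaneZ.
have Y21 : (Y <= hplane (p3 (r + 2)%R (r + 1)%R))%MS.
  by have := kerR_sub_rho P (r + 2); rewrite /rho c21 c22 P0 scale0r add0r sub_hplaneZ.
have Za : (Z <= a3 (r + 2)%R)%MS := capmxSr _ _.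
have Z01 : (Z <= hplane (p3 r (r + 1)%R))%MS.
  have Z0 := submx_trans (capmxSl Y (a3 (r + 2)%R)) (kerR_sub_rho P r).
  have Z02 := submx_trans Za (a_sub_pi (i36_neq n02)).
  rewrite -(sub_hplaneZ _ _ nP1); have := sub_hplaneD 1 (- P 0 (r + 2)) Z0 Z02.
  by rewrite /rho scale1r scaleNr addrK.
have Z0 : Z = 0.
  apply: skew_sub_eq0 (a_skew (i36_neq n12)) _ Za.
  apply: (sub_hplane2 (b_full (i36_neq n02)) (b_sub_pi (i36_neq n01))
    (b_sub_pi (i36_neqC n12)) _ _ _ _ _ Z01 (submx_trans (capmxSl Y _) Y21));
  by rewrite ?pi_neq0 ?a_rank ?a_sub_pi ?i36_neq // eq_sym.
have : (\rank (Y + a3 (r + 2)%R)%MS <= 3)%N.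
  have YA : (Y + a3 (r + 2)%R <= hplane (p3 (r + 1)%R (r + 2)%R))%MS.
    by rewrite addsmx_sub Y12 a_sub_pi ?i36_neq.
  by have := mxrankS YA; rewrite mxrank_hplane ?pi_neq0 ?i36_neq.
have := mxrank_sum_cap Y (a3 (r + 2)); rewrite -/Z Z0 mxrank0 a_rank; lia.
Qed.

Lemma kerR_cases P : P != 0 -> (2 <= \rank (kerR P))%N ->
  (forall r, P 0 r != 0) \/ exists r, (kerR P == a3 r)%MS.
Proof.
move=> nP rK; have [/forallP|/forallPn[r /negPn/eqP P0]] := boolP [forall r, P 0 r != 0].
  by left.
right; case: (I3_cycle r) => c11 c12 c21 c22.
have [P1|nP1] := eqVneq (P 0 (r + 1)) 0; have [P2|nP2] := eqVneq (P 0 (r + 2)) 0.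
- by case/eqP: nP; apply/rowP => s; rewrite mxE; case: (I3_cases r s) => ->.
- by exists (r + 2); apply: kerR_supported; rewrite ?c21 ?c22.
- by exists (r + 1); apply: kerR_supported; rewrite ?c11 ?c12.
- by have := kerR_rank_le1 P0 nP1 nP2; rewrite leqNgt rK.
Qed.

Section GenericPoint.
Variable P : 'rV[k]_3.
Hypothesis P_neq0 : forall r, P 0 r != 0.

Lemma rho_neq0 r : rho P r != 0.
Proof.
case: (I3_neq r) => n01 n02 n12; apply/eqP.
case/(hplane_full_free (a_full (i36_neq n12)) (a_sub_pi (i36_neq n01)) (a_sub_pi (i36_neq n02))
  (pi_neq0 (i36_neq n01)) (pi_neq0 (i36_neq n02))) => /eqP.
by rewrite (negPf (P_neq0 _)).
Qed.

Lemma kerR_rank_le2 : (\rank (kerR P) <= 2)%N.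
Proof.
case: (I3_neq 0) => _ _ n12.
exact: (mxrank_sub_hplane2 (b_full (i36_neq n12)) (b_sub_rho P _) (b_sub_rho P _)
  (rho_neq0 _) (rho_neq0 _) (kerR_sub_rho P _) (kerR_sub_rho P _)).
Qed.

Lemma kerR_relation_coords (w : 'rV[k]_3) :
  w != 0 -> w *m forms_at (Rmat pi) P = 0 -> forall r, w 0 r != 0.
Proof.
move=> nw wR r; apply: contra nw => /eqP w0; case: (I3_neq r) => _ _ n12.
have : w 0 (r + 1) *: rho P (r + 1) + w 0 (r + 2) *: rho P (r + 2) = 0.
  by rewrite -wR mulmx_sum_row (big_I3_cycle _ _ r) /= !row_forms_at_Rmat w0 scale0r add0r.
case/(hplane_full_free (b_full (i36_neq n12)) (b_sub_rho P _) (b_sub_rho P _)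
  (rho_neq0 _) (rho_neq0 _)) => w1 w2.
by apply/eqP/rowP => s; rewrite mxE; case: (I3_cases r s) => ->.
Qed.

End GenericPoint.

Hypothesis R_det : exists c : k, c != 0 /\
  lin_poly (p3 0 1) * lin_poly (p3 1 2) * lin_poly (p3 2 0)
  + lin_poly (p3 0 2) * lin_poly (p3 1 0) * lin_poly (p3 2 1) = c *: F.

Definition detR (x : 'rV[k]_4) : k :=
  lin_eval (p3 0 1) x * lin_eval (p3 1 2) x * lin_eval (p3 2 0) x
  + lin_eval (p3 0 2) x * lin_eval (p3 1 0) x * lin_eval (p3 2 1) x.

Lemma detR_on_a j x : (x <= a j)%MS -> detR x = 0.
Proof.
move=> xa; case: R_det => c [_ RF].
have : pt_eval F x = 0 by case: ab_double_six => /(_ j)[_ [_ [aF _]]] _; exact: aF xa.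
rewrite /detR -!pt_eval_lin_poly /pt_eval -!mevalM -mevalD RF mevalZ => ->.
exact: mulr0.
Qed.

Lemma a_meets_b3 j r : (3 <= j)%N ->
  exists2 p : 'rV[k]_4, p != 0 & (p <= a j)%MS && (p <= b3 r)%MS.
Proof.
move=> j3; exists (nz_row (a j :&: b3 r)%MS); last by rewrite -sub_capmx nz_row_sub.
by rewrite nz_row_eq0; apply: ab_meet; apply: i36_ge3.
Qed.

(* Expanding [detR] along the line through p0 and p1 with the zeros of the forms on
   b_0, b_1 and the relation given by p2 on b_2 shows that the hollow matrix of values
   of the forms at p1 (row 0) and p0 (rows 1, 2) is singular. *)
Lemma kerR_sub_pencil (p0 p1 p2 : 'rV[k]_4) (al be : k) :
  (p0 <= b3 0)%MS -> (p1 <= b3 1)%MS -> (p2 <= b3 2)%MS ->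
  p2 = al *: p0 + be *: p1 -> be != 0 -> (forall t : k, detR (1 *: p0 + t *: p1) = 0) ->
  exists2 P, P != 0 & (p0 <= kerR P)%MS && (p1 <= kerR P)%MS.
Proof.
move=> p0b p1b p2b p2E nbe detR0.
have [t [nt nbt]] : exists t : k, t != 0 /\ be - t * al != 0.
  have [t [nt tq]] := closed_field_avoid (be / al); exists t; split=> //.
  have [-> | nal] := eqVneq al 0; first by rewrite mulr0 subr0.
  by apply: contra tq; rewrite subr_eq0 => /eqP ->; rewrite mulfK.
have zb r s p : r != s -> (p <= b3 r)%MS -> lin_eval (p3 r s) p = 0.
  by move=> rs pb; apply: lin_eval_eq0 (b_sub_pi (i36_neq rs)) pb.
pose q r := if r == 0 then p1 else p0.
have [P nP PE] : exists2 P : 'rV[k]_3, P != 0 &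
    forall r, P 0 (r + 1) * lin_eval (p3 r (r + 1)) (q r)
            + P 0 (r + 2) * lin_eval (p3 r (r + 2)) (q r) = 0.
  apply: (@hollow3_kernel _ (fun r s => lin_eval (p3 r s) (q r))); rewrite /q /=.
  have z01 : lin_eval (p3 0 1) p0 = 0 by apply: zb p0b.
  have z02 : lin_eval (p3 0 2) p0 = 0 by apply: zb p0b.
  have z10 : lin_eval (p3 1 0) p1 = 0 by apply: zb p1b.
  have z12 : lin_eval (p3 1 2) p1 = 0 by apply: zb p1b.
  have := detR0 t; rewrite /detR !lin_evalDr z01 z02 z10 z12 => D.
  apply: (pencil_cubic_eq0 nt nbt (f20 := lin_eval (p3 2 0) p1) (f21 := lin_eval (p3 2 1) p1)).
  - by rewrite -lin_evalDr -p2E (zb _ _ _ _ p2b).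
  - by rewrite -lin_evalDr -p2E (zb _ _ _ _ p2b).
  - by rewrite -D; ring.
have rhoq r : lin_eval (rho P r) (q r) = 0 by rewrite lin_evalDl PE.
exists P => //; rewrite !sub_kerR; apply/andP; split; apply/forallP => r.
  have [-> | r0] := eqVneq r 0; first exact: submx_trans p0b (b_sub_rho P 0).
  by rewrite sub_hplane_row -(rhoq r) /q (negPf r0).
rewrite sub_hplane_row; have [-> | r0] := eqVneq r 0; first by rewrite -(rhoq 0).
have [-> | r1] := eqVneq r 1.
  by rewrite -sub_hplane_row (submx_trans p1b (b_sub_rho P 1)).
rewrite (I3_other r0 r1).
have r20 : lin_eval (rho P 2) p0 = 0 by have := rhoq 2; rewrite /q.
have : lin_eval (rho P 2) p2 = 0 by apply: lin_eval_eq0 (b_sub_rho P 2) p2b.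
by rewrite p2E lin_evalDr r20 mulr0 add0r => /eqP; rewrite mulf_eq0 (negPf nbe).
Qed.

Lemma kerR_sub_a j : (3 <= j)%N -> exists2 P, P != 0 & (a j <= kerR P)%MS.
Proof.
move=> j3.
have [p0 np0 /andP[p0a p0b]] := a_meets_b3 0 j3.
have [p1 np1 /andP[p1a p1b]] := a_meets_b3 1 j3.
have [p2 np2 /andP[p2a p2b]] := a_meets_b3 2 j3.
have aj01 : (a j <= p0 + p1)%MS.
  exact: points_span_line (a_rank j) (b_skew (i36_neq _)) p0a p1a p0b p1b np0 np1.
have [al [be p2E]] := sub_addsmx_rowP (submx_trans p2a aj01).
have nbe : be != 0.
  apply: contraNneq np2 => be0; apply/eqP.
  apply: skew_sub_eq0 (b_skew (i36_neq (_ : 0 != 2))) _ p2b => //.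
  by rewrite p2E be0 scale0r addr0 scalemx_sub.
have detR0 (t : k) : detR (1 *: p0 + t *: p1) = 0.
  by apply: (detR_on_a (j := j)); rewrite addmx_sub ?scalemx_sub.
have [P nP /andP[p0K p1K]] := kerR_sub_pencil p0b p1b p2b p2E nbe detR0.
by exists P => //; apply: submx_trans aj01 _; rewrite addsmx_sub p0K.
Qed.

Lemma kerR_eq_a j : (3 <= j)%N -> exists P, (forall r, P 0 r != 0) /\ (kerR P == a j)%MS.
Proof.
move=> j3; have [P nP aK] := kerR_sub_a j3.
have rK : (2 <= \rank (kerR P))%N by have := mxrankS aK; rewrite a_rank.
case: (kerR_cases nP rK) => [Pnz | [r /andP[Ka _]]].
  exists P; split=> //; rewrite /eqmx aK andbT.
  by rewrite -(geq_leqif (mxrank_leqif_sup aK)) a_rank kerR_rank_le2.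
by move/eqP: (i36_ge3 r j3); case; apply: a_sub_a (submx_trans aK Ka).
Qed.

(* A vector [c] of ['rV_(3 + 3)] lists coefficients of the six forms: [c 0 (lshift 3 r)]
   for pi_(r,r+1) and [c 0 (rshift 3 r)] for pi_(r,r+2).  [relpart c r] is the part of
   the combination that vanishes on b_r. *)
Definition relpart (c : 'rV[k]_(3 + 3)) r : 'rV[k]_4 :=
  c 0 (lshift 3 r) *: p3 r (r + 1) + c 0 (rshift 3 r) *: p3 r (r + 2).

Definition pi6 : 'M[k]_(3 + 3, 4) :=
  col_mx (\matrix_r p3 r (r + 1)) (\matrix_r p3 r (r + 2)).

Definition relations : 'M[k]_(3 + 3) := kermx pi6.

Definition relcubic (c : 'rV[k]_(3 + 3)) : k :=
  \prod_r c 0 (lshift 3 r) - \prod_r c 0 (rshift 3 r).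

Lemma sub_relations c : (c <= relations)%MS = (\sum_r relpart c r == 0).
Proof.
rewrite sub_kermx -{1}[c]hsubmxK mul_row_col !mulmx_sum_row -big_split /=.
by congr (_ == 0); apply: eq_bigr => r _; rewrite !rowK !mxE.
Qed.

Lemma relpart_b c r : (b3 r <= hplane (relpart c r))%MS.
Proof. by case: (I3_neq r) => n01 n02 _; rewrite sub_hplaneD ?b_sub_pi ?i36_neq. Qed.

Lemma relpart_eq0 c r :
  relpart c r = 0 -> c 0 (lshift 3 r) = 0 /\ c 0 (rshift 3 r) = 0.
Proof.
case: (I3_neq r) => n01 n02 n12.
exact: (hplane_full_free (a_full (i36_neq n12)) (a_sub_pi (i36_neq n01))
  (a_sub_pi (i36_neq n02)) (pi_neq0 (i36_neq n01)) (pi_neq0 (i36_neq n02))).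
Qed.

Lemma relation_eq0 c s : (c <= relations)%MS -> relpart c s = 0 -> c = 0.
Proof.
move=> cR cs0; case: (I3_neq s) => _ _ n12.
move: cR; rewrite sub_relations (big_I3_cycle _ _ s) /= cs0 add0r => /eqP sum12.
have c1 := hplane_full_addr_eq0 (b_full (i36_neq n12)) (relpart_b c _) (relpart_b c _) sum12.
move: sum12; rewrite c1 add0r => c2.
have all0 t : relpart c t = 0 by case: (I3_cases s t) => ->.
rewrite -[c]hsubmxK; apply/eqP; rewrite row_mx_eq0.
by apply/andP; split; apply/eqP/rowP => t; rewrite !mxE; case: (relpart_eq0 (all0 t)).
Qed.

Lemma relation_y_neq0 c s : (c <= relations)%MS -> c != 0 ->
  c 0 (lshift 3 s) = 0 -> forall t, c 0 (rshift 3 t) != 0.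
Proof.
move=> cR nc xs t; apply: contra nc => /eqP yt; apply/eqP.
case: (I3_cycle s) => c11 c12 c21 c22; case: (I3_neq s) => n01 n02 n12.
have rel0 : relpart c s = c 0 (rshift 3 s) *: p3 s (s + 2) by rewrite /relpart xs scale0r add0r.
have rel1 : relpart c (s + 1) =
    c 0 (lshift 3 (s + 1)) *: p3 (s + 1) (s + 2) + c 0 (rshift 3 (s + 1)) *: p3 (s + 1) s.
  by rewrite /relpart c11 c12.
have sum0 := cR; rewrite sub_relations (big_I3_cycle _ _ s) /= in sum0; move/eqP: sum0 => sum0.
case: (I3_cases s t) => tE; rewrite {t}tE in yt.
- by apply: (relation_eq0 cR (s := s)); rewrite rel0 yt scale0r.
- apply: (relation_eq0 cR (s := s + 2)).
  have rel2 : relpart c s + relpart c (s + 1) = - relpart c (s + 2).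
    by apply/eqP; rewrite -addr_eq0 sum0.
  have a2 : (a3 (s + 2)%R <= hplane (relpart c (s + 2)%R))%MS.
    have nm1 : (-1 : k) != 0 by rewrite oppr_eq0 oner_eq0.
    rewrite -(sub_hplaneZ _ _ nm1) scaleN1r -rel2 rel0 rel1 yt.
    by rewrite scale0r addr0 sub_hplaneD ?a_sub_pi ?i36_neq.
  exact: (hplane_full_eq0 (ab_full _) a2 (relpart_b c _)).
- have sumE :
      (c 0 (rshift 3 s) *: p3 s (s + 2) + c 0 (lshift 3 (s + 1)) *: p3 (s + 1) (s + 2))
      + (c 0 (rshift 3 (s + 1)) *: p3 (s + 1) s + c 0 (lshift 3 (s + 2)) *: p3 (s + 2) s) = 0.
    by rewrite -sum0 rel0 rel1 /relpart c21 c22 yt scale0r addr0 !addrA.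
  have u0 := hplane_full_addr_eq0 (a_full (i36_neqC n02))
    (sub_hplaneD _ _ (a_sub_pi (i36_neq n02)) (a_sub_pi (i36_neq n12)))
    (sub_hplaneD _ _ (a_sub_pi (i36_neqC n01)) (a_sub_pi (i36_neqC n02))) sumE.
  have y00 := hplane_full_addr_eq0 (b_full (i36_neq n01))
    (sub_hplaneZr _ (b_sub_pi (i36_neq n02))) (sub_hplaneZr _ (b_sub_pi (i36_neq n12))) u0.
  by apply: (relation_eq0 cR (s := s)); rewrite rel0.
Qed.

Lemma relcubic_neq0 c s :
  (c <= relations)%MS -> c != 0 -> c 0 (lshift 3 s) = 0 -> relcubic c != 0.
Proof.
move=> cR nc xs; have x0 : \prod_r c 0 (lshift 3 r) = 0.
  by apply/eqP/prodf_eq0; exists s; rewrite ?xs.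
rewrite /relcubic x0 sub0r oppr_eq0; apply/prodf_neq0 => t _.
exact: relation_y_neq0 cR nc xs t.
Qed.

(* A common zero of the six forms would lie on both a_1 and a_2. *)
Lemma mxrank_relations : \rank relations = 2%N.
Proof.
pose Y := kermx pi6^T.
have Ypi e : (Y <= hplane (row e pi6))%MS.
  by move: (submx_refl Y); rewrite sub_kermx_tr => /forallP.
have Y_top r : (Y <= hplane (p3 r (r + 1)%R))%MS.
  by have := Ypi (lshift 3 r); rewrite rowKu rowK.
have Y_bot r : (Y <= hplane (p3 r (r + 2)%R))%MS.
  by have := Ypi (rshift 3 r); rewrite rowKd rowK.
case: (I3_cycle 0) => c11 _ _ c22; case: (I3_neq 0) => n01 n02 n12.
have Y1 : (Y <= a3 (0 + 1)%R)%MS.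
  have := Y_bot (0 + 2); rewrite c22 => Y21.
  apply: (sub_hplane2 (b_full (i36_neq n02)) (b_sub_pi (i36_neq n01))
    (b_sub_pi (i36_neqC n12)) _ _ _ _ _ (Y_top 0) Y21);
  by rewrite ?pi_neq0 ?a_rank ?a_sub_pi ?i36_neq // eq_sym.
have Y2 : (Y <= a3 (0 + 2)%R)%MS.
  have := Y_top (0 + 1); rewrite c11 => Y12.
  apply: (sub_hplane2 (b_full (i36_neq n01)) (b_sub_pi (i36_neq n02))
    (b_sub_pi (i36_neq n12)) _ _ _ _ _ (Y_bot 0) Y12);
  by rewrite ?pi_neq0 ?a_rank ?a_sub_pi ?i36_neq.
have Y0 := skew_sub_eq0 (a_skew (i36_neq n12)) Y1 Y2.
have := mxrank_ker pi6^T; rewrite -/Y Y0 mxrank0 mxrank_tr => rpi6.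
rewrite mxrank_ker; have := rank_leq_col pi6; move: (\rank pi6) rpi6; lia.
Qed.

Lemma relcubic_nonvanishing : exists2 c, (c <= relations)%MS & relcubic c != 0.
Proof.
have rR : (2 <= \rank relations)%N by rewrite mxrank_relations.
have [c nc /andP[cR /eqP c0]] := rank2_coord_eq0 (lshift 3 (0 : 'I_3)) rR.
by exists c => //; apply: relcubic_neq0 cR nc c0.
Qed.

Lemma relcubic_cubic_form : cubic_form relcubic.
Proof.
move=> u v; pose x c r := c 0 (lshift 3 r) : k; pose y c r := c 0 (rshift 3 r) : k.
exists (x u 0 * x u 1 * x v 2 + x u 0 * x v 1 * x u 2 + x v 0 * x u 1 * x u 2
  - (y u 0 * y u 1 * y v 2 + y u 0 * y v 1 * y u 2 + y v 0 * y u 1 * y u 2)).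
exists (x u 0 * x v 1 * x v 2 + x v 0 * x u 1 * x v 2 + x v 0 * x v 1 * x u 2
  - (y u 0 * y v 1 * y v 2 + y v 0 * y u 1 * y v 2 + y v 0 * y v 1 * y u 2)).
by move=> s t; rewrite /relcubic !big_I3 /= !mxE /x /y; ring.
Qed.

Definition relvec (w P : 'rV[k]_3) : 'rV[k]_(3 + 3) :=
  row_mx (\row_r (w 0 r * P 0 (r + 1))) (\row_r (w 0 r * P 0 (r + 2))).

Lemma relpart_relvec w P r : relpart (relvec w P) r = w 0 r *: rho P r.
Proof. by rewrite /relpart row_mxEl row_mxEr !mxE /rho scalerDr !scalerA. Qed.

Lemma relvec_relation w P :
  w *m forms_at (Rmat pi) P = 0 -> (relvec w P <= relations)%MS.
Proof.
move=> wR; rewrite sub_relations; apply/eqP; rewrite -[RHS]wR mulmx_sum_row.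
apply: eq_bigr => r _.
by rewrite relpart_relvec row_forms_at_Rmat.
Qed.

Lemma relcubic_relvec w P : relcubic (relvec w P) = 0.
Proof.
rewrite /relcubic; under eq_bigr do rewrite row_mxEl mxE.
under [X in _ - X]eq_bigr do rewrite row_mxEr mxE.
by rewrite !big_split /= !prod_I3_shift subrr.
Qed.

Lemma relvec_neq0 w P :
  (forall r, w 0 r != 0) -> (forall r, P 0 r != 0) -> relvec w P != 0.
Proof.
move=> wnz Pnz; apply/eqP => /rowP/(_ (lshift 3 0)); rewrite row_mxEl !mxE => /eqP.
by rewrite mulf_eq0 (negPf (wnz _)) (negPf (Pnz _)).
Qed.

Lemma rhoZ (t : k) P r : rho (t *: P) r = t *: rho P r.
Proof. by rewrite /rho !mxE scalerDr !scalerA. Qed.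

Lemma kerR_scale (t : k) P : t != 0 -> (kerR (t *: P) == kerR P)%MS.
Proof.
move=> nt; apply/andP; split; rewrite sub_kerR; apply/forallP => r.
  by rewrite -(sub_hplaneZ _ _ nt) -rhoZ kerR_sub_rho.
by rewrite rhoZ sub_hplaneZr ?kerR_sub_rho.
Qed.

Lemma relvec_sub_kerR w P (w' P' : 'rV[k]_3) :
  (forall r, w 0 r != 0) -> (forall r, P 0 r != 0) -> (forall r, P' 0 r != 0) ->
  (relvec w P <= relvec w' P')%MS -> (kerR P == kerR P')%MS.
Proof.
move=> wnz Pnz P'nz /sub_rVP[t relE].
have entry r : w 0 r * P 0 (r + 1) = t * (w' 0 r * P' 0 (r + 1))
             /\ w 0 r * P 0 (r + 2) = t * (w' 0 r * P' 0 (r + 2)).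
  have := congr1 (fun c : 'rV_(3 + 3) => (c 0 (lshift 3 r), c 0 (rshift 3 r))) relE.
  by rewrite /= !(row_mxEl, row_mxEr, mxE) => -[-> ->].
have cross r : P 0 (r + 1) * P' 0 (r + 2) = P 0 (r + 2) * P' 0 (r + 1).
  have [e1 e2] := entry r.
  have ntw : t * w' 0 r != 0.
    apply: contraTneq (mulf_neq0 (wnz r) (Pnz (r + 1))) => tw0.
    by rewrite e1 mulrA tw0 mul0r eqxx.
  apply: (mulfI (mulf_neq0 ntw (wnz r))).
  rewrite [LHS](_ : _ = w 0 r * P 0 (r + 1) * (t * (w' 0 r * P' 0 (r + 2)))); last by ring.
  rewrite [RHS](_ : _ = w 0 r * P 0 (r + 2) * (t * (w' 0 r * P' 0 (r + 1)))); last by ring.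
  by rewrite -e1 -e2 mulrC.
have P'0 := P'nz 0; case: (I3_cycle 0) => c11 c12 c21 c22.
have -> : P = (P 0 0 / P' 0 0) *: P'.
  apply/rowP => s; rewrite mxE; case: (I3_cases 0 s) => ->; first by rewrite divfK.
    have := cross (0 + 2); rewrite c21 c22 => cr.
    by apply: (mulIf P'0); rewrite mulrAC divfK // cr.
  have := cross (0 + 1); rewrite c11 c12 => cr.
  by apply: (mulIf P'0); rewrite mulrAC divfK // cr.
by apply: kerR_scale; rewrite mulf_neq0 ?invr_eq0.
Qed.

Lemma mxrank_kerR P : \rank (kerR P) = (4 - \rank (forms_at (Rmat pi) P))%N.
Proof. by rewrite mxrank_ker mxrank_tr. Qed.

Lemma relvec_exists P : (forall r, P 0 r != 0) -> (2 <= \rank (kerR P))%N ->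
  exists2 w : 'rV[k]_3, (forall r, w 0 r != 0) & (relvec w P <= relations)%MS.
Proof.
move=> Pnz; rewrite mxrank_kerR => rK; set A := forms_at (Rmat pi) P.
pose w := nz_row (kermx A).
have wA : w *m A = 0 by apply/eqP; rewrite -sub_kermx nz_row_sub.
have nw : w != 0 by rewrite nz_row_eq0 -mxrank_eq0 mxrank_ker; move: (\rank A) rK; lia.
by exists w; [apply: kerR_relation_coords Pnz w nw wA | apply: relvec_relation].
Qed.

Lemma a_relvec j : (3 <= j)%N -> exists w Q : 'rV[k]_3, [/\ forall r, w 0 r != 0,
  forall r, Q 0 r != 0, (relvec w Q <= relations)%MS & (kerR Q == a j)%MS].
Proof.
move=> j3; have [Q [Qnz Kj]] := kerR_eq_a j3.
have rQ : (2 <= \rank (kerR Q))%N by rewrite (eqmx_rank Kj) a_rank.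
by have [w wnz wR] := relvec_exists Qnz rQ; exists w, Q.
Qed.

Lemma relvec_lines_neq j j' (w Q w' Q' : 'rV[k]_3) : j != j' ->
  (forall r, w 0 r != 0) -> (forall r, Q 0 r != 0) -> (forall r, Q' 0 r != 0) ->
  (kerR Q == a j)%MS -> (kerR Q' == a j')%MS -> ~~ (relvec w Q == relvec w' Q')%MS.
Proof.
move=> jj' wnz Qnz Q'nz /andP[_ aQ] /andP[Q'a _]; apply/negP => /andP[QQ' _].
have /andP[KK' _] := relvec_sub_kerR wnz Qnz Q'nz QQ'.
by move/eqP: jj'; apply; apply: a_sub_a (submx_trans aQ (submx_trans KK' Q'a)).
Qed.

Lemma kerR_generic_eq_a P : (forall r, P 0 r != 0) -> (2 <= \rank (kerR P))%N ->
  exists j, (kerR P == a j)%MS.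
Proof.
move=> Pnz rK; have [w wnz wR] := relvec_exists Pnz rK.
have [w3 [Q3 [w3nz Q3nz R3 K3]]] := a_relvec (j := 3) isT.
have [w4 [Q4 [w4nz Q4nz R4 K4]]] := a_relvec (j := 4) isT.
have [w5 [Q5 [w5nz Q5nz R5 K5]]] := a_relvec (j := 5) isT.
have close j (w' Q : 'rV[k]_3) : (forall r, Q 0 r != 0) -> (kerR Q == a j)%MS ->
    (relvec w P <= relvec w' Q)%MS -> exists j, (kerR P == a j)%MS.
  by move=> Qnz Kj PQ; exists j; apply: eqmxb_trans (relvec_sub_kerR wnz Pnz Qnz PQ) Kj.
have := cubic_form_three_zeros relcubic_cubic_form (eq_leq mxrank_relations)
  relcubic_nonvanishing wR R3 R4 R5 (relcubic_relvec _ _) (relcubic_relvec _ _)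
  (relcubic_relvec _ _) (relcubic_relvec _ _) (relvec_neq0 wnz Pnz)
  (relvec_neq0 w3nz Q3nz) (relvec_neq0 w4nz Q4nz) (relvec_neq0 w5nz Q5nz)
  (@relvec_lines_neq 4 3 w4 Q4 w3 Q3 isT w4nz Q4nz Q3nz K4 K3)
  (@relvec_lines_neq 5 3 w5 Q5 w3 Q3 isT w5nz Q5nz Q3nz K5 K3)
  (@relvec_lines_neq 5 4 w5 Q5 w4 Q4 isT w5nz Q5nz Q4nz K5 K4).
case/or3P => /andP[PQ _].
- exact: close Q3nz K3 PQ.
- exact: close Q4nz K4 PQ.
- exact: close Q5nz K5 PQ.
Qed.

Lemma kerR_delta r : (kerR (delta_mx 0 r) == a3 r)%MS.
Proof.
case: (I3_neq r) => n01 n02 _.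
by apply: kerR_supported; rewrite !mxE !eqxx /= ?oner_eq0 // eq_sym ?(negPf n01) ?(negPf n02).
Qed.

Lemma corr_line_Rmat L : corr_line (Rmat pi) L <-> exists i, (L == a i)%MS.
Proof.
split=> [[P [nP [rP LK]]] | [i La]].
  have rK : (2 <= \rank (kerR P))%N by rewrite mxrank_kerR rP.
  have [j Kj] : exists j, (kerR P == a j)%MS.
    case: (kerR_cases nP rK) => [Pnz | [r Kr]]; last by exists (i36 r).
    exact: kerR_generic_eq_a Pnz rK.
  by exists j; apply: eqmxb_trans LK Kj.
have [P nP Ka] : exists2 P, P != 0 & (kerR P == a i)%MS.
  have [i3 | i3] := leqP 3 i.
    have [P [Pnz Ka]] := kerR_eq_a i3; exists P => //.
    by apply/eqP => P0; move: (Pnz 0); rewrite P0 mxE eqxx.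
  have -> : i = i36 (Ordinal i3) by apply/val_inj.
  exists (delta_mx 0 (Ordinal i3)); last exact: kerR_delta.
  by apply/eqP => /matrixP/(_ 0 (Ordinal i3)); rewrite !mxE !eqxx => /eqP; rewrite oner_eq0.
exists P; split=> //; split.
  have := mxrank_kerR P; rewrite (eqmx_rank Ka) a_rank.
  by have := rank_leq_row (forms_at (Rmat pi) P); lia.
by apply: eqmxb_trans La _; rewrite /eqmx andbC.
Qed.

End DoubleSixPlanes.

Lemma double_six_sym (k : fieldType) (F : {mpoly k[4]}) (a b : 'I_6 -> 'M[k]_(2, 4)) :
  double_six F a b -> double_six F b a.
Proof.
case=> lines [skew_a [skew_b meet_ab]]; split.
  by move=> i; case: (lines i) => ? [? [? ?]].
split=> //; split=> // i j.
by rewrite /lines_meet capmxC -/(lines_meet _ _) meet_ab eq_sym.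
Qed.

Lemma Rmat_tr (k : fieldType) (pi : 'I_6 -> 'I_6 -> 'rV[k]_4) :
  (Rmat pi)^T = Rmat (fun i j => pi j i).
Proof. by apply/matrixP => r s; rewrite !mxE eq_sym. Qed.

Theorem mainTheorem2 (k : closedFieldType) (F : {mpoly k[4]})
    (a b : 'I_6 -> 'M[k]_(2,4)) (pi : 'I_6 -> 'I_6 -> 'rV[k]_4) :
  smooth_cubic_form F ->
  double_six F a b ->
  (forall i j : 'I_6, i != j ->
     pi i j != 0 /\ form_vanishes_on (pi i j) (b i) /\ form_vanishes_on (pi i j) (a j)) ->
  (exists c : k, c != 0 /\
     lin_poly (pi (i36 0) (i36 1)) * lin_poly (pi (i36 1) (i36 2)) * lin_poly (pi (i36 2) (i36 0))
   + lin_poly (pi (i36 0) (i36 2)) * lin_poly (pi (i36 1) (i36 0)) * lin_poly (pi (i36 2) (i36 1))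
   = c *: F) ->
  (forall L : 'M[k]_(2,4), is_line L ->
     corr_line (Rmat pi) L <-> exists i : 'I_6, (L == a i)%MS) /\
  (forall L : 'M[k]_(2,4), is_line L ->
     corr_line (Rmat pi)^T L <-> exists i : 'I_6, (L == b i)%MS).
Proof.
move=> _ ab_six pi_planes R_det; split=> L _; first exact: corr_line_Rmat ab_six pi_planes R_det L.
rewrite Rmat_tr; apply: (corr_line_Rmat (double_six_sym ab_six)).
  by move=> i j; rewrite eq_sym => /pi_planes[nz [bj ai]].
have [c [nc R_F]] := R_det; exists c; split=> //; rewrite -R_F; ring.
Qed.
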